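(* Let $A$ and $B$ be two $n \times n \times n$ alternating sign hypermatrices. Then $A-B$ can be expressed as a sum of T-blocks.
   Context: An $n\times n\times n$ hypermatrix $A=[a_{ijk}]$ has row lines $A_{*jk}=[a_{ijk}: i=1,\dots,n]$, column lines $A_{i*k}=[a_{ijk}: j=1,\dots,n]$ and vertical lines $A_{ij*}=[a_{ijk}: k=1,\dots,n]$. An alternating sign hypermatrix (ASHM) is an $n\times n\times n$ hypermatrix with entries in $\{0,1,-1\}$ such that in every row line, column line and vertical line the non-zero entries alternate in sign, starting and ending with $+1$. For indices $i_1<i_2$, $j_1<j_2$, $k_1<k_2$ in $\{1,\dots,n\}$, the hypermatrix $T_{i_1,j_1,k_1:\,i_2,j_2,k_2}=[t_{ijk}]$ has $t_{ijk}=1$ for $(i,j,k)\in\{(i_1,j_1,k_1),(i_2,j_2,k_1),(i_2,j_1,k_2),(i_1,j_2,k_2)\}$, $t_{ijk}=-1$ for $(i,j,k)\in\{(i_2,j_1,k_1),(i_1,j_2,k_1),(i_1,j_1,k_2),(i_2,j_2,k_2)\}$, and $t_{ijk}=0$ otherwise. A T-block is a hypermatrix of the form $T_{i_1,j_1,k_1:\,i_2,j_2,k_2}$ or $-T_{i_1,j_1,k_1:\,i_2,j_2,k_2}$. *)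

From mathcomp Require Import all_boot all_order all_algebra.
Set Implicit Arguments. Unset Strict Implicit. Unset Printing Implicit Defensive.
Import Order.TTheory GRing.Theory Num.Theory.
Local Open Scope ring_scope.

(* An n x n x n hypermatrix with integer entries, indexed by 'I_n (i.e. {1..n}
   shifted to {0..n-1}). *)
Definition hypermatrix (n : nat) := 'I_n -> 'I_n -> 'I_n -> int.

(* A line (sequence of entries) is alternating-sign: all entries are in
   {0,1,-1}, and its non-zero entries, read in order, are 1,-1,1,...,-1,1
   (they alternate in sign, start with +1 and end with +1). *)
Definition alt_sign_line (s : seq int) : Prop :=
  (forall x, x \in s -> x \in [:: 0; 1; -1]) /\
  let t := [seq x <- s | x != 0] in
  t = mkseq (fun i => (-1) ^+ i) (size t) /\ odd (size t).

Definition row_line n (A : hypermatrix n) (j k : 'I_n) : seq int :=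
  [seq A i j k | i <- enum 'I_n].
Definition col_line n (A : hypermatrix n) (i k : 'I_n) : seq int :=
  [seq A i j k | j <- enum 'I_n].
Definition vert_line n (A : hypermatrix n) (i j : 'I_n) : seq int :=
  [seq A i j k | k <- enum 'I_n].

Definition is_ASHM n (A : hypermatrix n) : Prop :=
  (forall i j k, A i j k \in [:: 0; 1; -1]) /\
  (forall j k, alt_sign_line (row_line A j k)) /\
  (forall i k, alt_sign_line (col_line A i k)) /\
  (forall i j, alt_sign_line (vert_line A i j)).

Definition Tmat n (i1 j1 k1 i2 j2 k2 : 'I_n) : hypermatrix n :=
  fun i j k =>
    if [|| (i == i1) && (j == j1) && (k == k1), (i == i2) && (j == j2) && (k == k1),
           (i == i2) && (j == j1) && (k == k2) | (i == i1) && (j == j2) && (k == k2)]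
    then 1
    else if [|| (i == i2) && (j == j1) && (k == k1), (i == i1) && (j == j2) && (k == k1),
                (i == i1) && (j == j1) && (k == k2) | (i == i2) && (j == j2) && (k == k2)]
    then -1 else 0.

(* A T-block datum: a sign (true = +T, false = -T) and indices
   (i1,j1,k1,i2,j2,k2). *)
Definition tblock_data n := (bool * ('I_n * 'I_n * 'I_n) * ('I_n * 'I_n * 'I_n))%type.

Definition valid_tblock n (t : tblock_data n) : bool :=
  let: (_, (i1, j1, k1), (i2, j2, k2)) := t in
  [&& (i1 < i2)%N, (j1 < j2)%N & (k1 < k2)%N].

Definition tblock n (t : tblock_data n) : hypermatrix n :=
  let: (b, (i1, j1, k1), (i2, j2, k2)) := t in
  fun i j k => (if b then 1 else -1) * Tmat i1 j1 k1 i2 j2 k2 i j k.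

Definition sum_of_tblocks n (C : hypermatrix n) : Prop :=
  exists ts : seq (tblock_data n),
    all (@valid_tblock n) ts /\
    forall i j k, C i j k = \sum_(t <- ts) tblock t i j k.

From mathcomp Require Import all_boot all_order all_algebra.
Set Implicit Arguments.
Unset Strict Implicit.
Unset Printing Implicit Defensive.
Import Order.TTheory GRing.Theory Num.Theory.
Local Open Scope ring_scope.

(* Every line of an ASHM sums to 1, so C := A - B has all its line sums equal
   to 0.  With indices 0..m and d_a := e_a - e_m for a < m, a vector f of zero
   sum is f = \sum_(a < m) f_a d_a.  Expanding C this way in each of the three
   directions gives C = \sum_(a, b, c < m) C_abc d_a (x) d_b (x) d_c, and
   d_a (x) d_b (x) d_c is exactly the T-block T_{a,b,c : m,m,m}. *)

Lemma sumr_sign_double (p : nat) : \sum_(0 <= i < p.*2) (-1 : int) ^+ i = 0.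
Proof.
elim: p => [|p IHp]; first by rewrite big_nil.
rewrite doubleS !big_nat_recr //= IHp add0r exprS -signr_odd odd_double.
by rewrite expr0 mulr1 addrN.
Qed.

Lemma alt_sign_line_sum (s : seq int) : alt_sign_line s -> \sum_(x <- s) x = 1.
Proof.
move=> [_ [def_t odd_t]].
have -> : \sum_(x <- s) x = \sum_(x <- [seq x <- s | x != 0]) x.
  by rewrite big_filter [RHS]big_mkcond; apply: eq_bigr => x _; case: eqP => [->|].
rewrite def_t /mkseq big_map -(subn0 (size _)) -/(index_iota 0 _).
rewrite -(odd_double_half (size _)) odd_t big_nat_recr //= sumr_sign_double.
by rewrite add0r -signr_odd odd_double.
Qed.

Definition has_zero_line_sums n (C : hypermatrix n) : Prop :=
  [/\ forall j k, \sum_i C i j k = 0, forall i k, \sum_j C i j k = 0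
    & forall i j, \sum_k C i j k = 0].

Lemma ASHM_line_sums n (A : hypermatrix n) : is_ASHM A ->
  [/\ forall j k, \sum_i A i j k = 1, forall i k, \sum_j A i j k = 1
    & forall i j, \sum_k A i j k = 1].
Proof.
move=> [_ [rowA [colA vertA]]]; split=> [j k | i k | i j].
- by rewrite -(alt_sign_line_sum (rowA j k)) big_map big_enum.
- by rewrite -(alt_sign_line_sum (colA i k)) big_map big_enum.
- by rewrite -(alt_sign_line_sum (vertA i j)) big_map big_enum.
Qed.

Lemma ASHM_sub_zero_line_sums n (A B : hypermatrix n) :
  is_ASHM A -> is_ASHM B -> has_zero_line_sums (fun i j k => A i j k - B i j k).
Proof.
move=> /ASHM_line_sums[rowA colA vertA] /ASHM_line_sums[rowB colB vertB].
by split=> *; rewrite sumrB ?(rowA, colA, vertA) ?(rowB, colB, vertB) subrr.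
Qed.

Section TblockSums.
Variable n : nat.
Implicit Types (C D : hypermatrix n).

Lemma eq_sum_of_tblocks C D :
  (forall i j k, C i j k = D i j k) -> sum_of_tblocks C -> sum_of_tblocks D.
Proof. by move=> eqCD [ts [ts_valid defC]]; exists ts; split=> // i j k; rewrite -eqCD. Qed.

Lemma sum_of_tblocks0 : @sum_of_tblocks n (fun _ _ _ => 0).
Proof. by exists [::]; split=> // i j k; rewrite big_nil. Qed.

Lemma sum_of_tblocksD C D : sum_of_tblocks C -> sum_of_tblocks D ->
  sum_of_tblocks (fun i j k => C i j k + D i j k).
Proof.
move=> [ts [ts_valid defC]] [us [us_valid defD]].
exists (ts ++ us); split=> [|i j k]; first by rewrite all_cat ts_valid.
by rewrite big_cat defC defD.
Qed.

Lemma sum_of_tblocks_sum (I : Type) (r : seq I) (F : I -> hypermatrix n) :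
  (forall x, sum_of_tblocks (F x)) ->
  sum_of_tblocks (fun i j k => \sum_(x <- r) F x i j k).
Proof.
move=> sumF; elim: r => [|x r IHr].
  by apply: eq_sum_of_tblocks sum_of_tblocks0 => i j k; rewrite big_nil.
apply: eq_sum_of_tblocks (sum_of_tblocksD (sumF x) IHr) => i j k.
by rewrite big_cons.
Qed.

Lemma sum_of_tblocks_scaleT (c : int) (i1 j1 k1 i2 j2 k2 : 'I_n) :
  (i1 < i2)%N -> (j1 < j2)%N -> (k1 < k2)%N ->
  sum_of_tblocks (fun i j k => c * Tmat i1 j1 k1 i2 j2 k2 i j k).
Proof.
move=> lti ltj ltk; exists (nseq `|c|%N (0 <= c, (i1, j1, k1), (i2, j2, k2))).
split=> [|i j k]; first by apply/allP => t /nseqP[-> _] /=; rewrite lti ltj ltk.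
rewrite big_nseq iter_addr_0 -mulr_natr natr_absz intz /=.
by case: (leP 0 c) => [/ger0_norm|/ltr0_norm] ->; rewrite ?mul1r ?mulN1r ?mulrNN mulrC.
Qed.

End TblockSums.

Definition delta_max {R : pzRingType} m (a : 'I_m) (i : 'I_m.+1) : R :=
  (i == widen_ord (leqnSn m) a)%:R - (i == ord_max)%:R.

Lemma sum_delta_max (R : pzRingType) m (f : 'I_m.+1 -> R) (i : 'I_m.+1) :
  \sum_x f x = 0 -> \sum_(a < m) delta_max a i * f (widen_ord (leqnSn m) a) = f i.
Proof.
rewrite big_ord_recr /= => /eqP; rewrite addr_eq0 => /eqP sum_f.
under eq_bigr do rewrite mulrBl.
rewrite sumrB -mulr_sumr sum_f mulrN opprK.
have pick_i : \sum_x (i == x)%:R * f x = f i.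
  under eq_bigr do rewrite mulr_natl mulrb.
  by rewrite -big_mkcond (big_pred1 i) // => x; apply: eq_sym.
by rewrite -pick_i big_ord_recr.
Qed.

Lemma Tmat_max_delta m (a b c : 'I_m) (i j k : 'I_m.+1) :
  let w := widen_ord (leqnSn m) in
  Tmat (w a) (w b) (w c) ord_max ord_max ord_max i j k
  = delta_max a i * delta_max b j * delta_max c k.
Proof.
have not_both x (y : 'I_m.+1) : ~~ ((y == widen_ord (leqnSn m) x) && (y == ord_max)).
  apply/negP => /andP[/eqP -> /eqP /(congr1 val) /= eq_x_m].
  by have := ltn_ord x; rewrite eq_x_m ltnn.
rewrite /Tmat /delta_max; move: (not_both a i) (not_both b j) (not_both c k).
case: (i == widen_ord _ a); case: (i == ord_max);
case: (j == widen_ord _ b); case: (j == ord_max);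
by case: (k == widen_ord _ c); case: (k == ord_max).
Qed.

Lemma zero_line_sums_expand m (C : hypermatrix m.+1) : has_zero_line_sums C ->
  let w := widen_ord (leqnSn m) in
  forall i j k, C i j k = \sum_(a < m) \sum_(b < m) \sum_(c < m)
    C (w a) (w b) (w c) * Tmat (w a) (w b) (w c) ord_max ord_max ord_max i j k.
Proof.
move=> [row0 col0 vert0] w i j k; symmetry.
under eq_bigr => a _ do under eq_bigr => b _ do under eq_bigr => c _ do
  rewrite Tmat_max_delta mulrC -!mulrA.
under eq_bigr => a _ do under eq_bigr => b _ do
  rewrite -!mulr_sumr (sum_delta_max _ (vert0 (w a) (w b))).
under eq_bigr => a _ do rewrite -mulr_sumr (sum_delta_max _ (col0 (w a) k)).
exact: sum_delta_max (row0 j k).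
Qed.

Lemma zero_line_sums_tblocks n (C : hypermatrix n) :
  has_zero_line_sums C -> sum_of_tblocks C.
Proof.
case: n C => [|m] C zeroC; first by exists [::]; split=> // [[]].
apply: eq_sum_of_tblocks (fun i j k => esym (zero_line_sums_expand zeroC i j k)) _.
do 3 apply: sum_of_tblocks_sum => ?.
by apply: sum_of_tblocks_scaleT; rewrite /= ltn_ord.
Qed.

Theorem lemma2p3 (n : nat) (A B : hypermatrix n) :
  is_ASHM A -> is_ASHM B ->
  sum_of_tblocks (fun i j k => A i j k - B i j k).
Proof.
by move=> ashmA ashmB; apply/zero_line_sums_tblocks/ASHM_sub_zero_line_sums.
Qed.
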